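(* Let $\Bbbk$ be a field, $n\ge2$, and $R=\Bbbk[x]/\langle x^n\rangle$. The following cones in $\mathbb V$ are equal: (1) ${\operatorname{B_{\mathbb Q}}}(R)$; (2) $D=\operatorname{pos}\{\pi_d: d \text{ an } R\text{-degree sequence}\}$; (3) the cone $F$ defined as the intersection of: $\{\epsilon_{i,j}\ge0\}$ for $i\in\{0,1,2\}$, $j\in\mathbb Z$; $\{\alpha_{0,k}\ge0\}$ for $k\in\mathbb Z$; $\{\theta_k\ge0\}$ for $k\in\mathbb Z$; $\{\eta_k\ge0\}$ for $k\in\mathbb Z$; $\{\alpha_{i,k}=0\}$ for all $i\ge1$, $k\in\mathbb Z$; and $\{\eta_\infty=0\}$.
   Context: $\mathbb V$: the $\mathbb Q$-vector space of column-finite rational matrices $v=(v_{i,j})$, $i\in\mathbb N$, $j\in\mathbb Z$. For a finitely generated graded $R$-module $M$, $\beta^R(M)\in\mathbb V$ has entries $\beta^R_{i,j}(M)=\dim_\Bbbk\operatorname{Tor}_i^R(M,\Bbbk)_j$; ${\operatorname{B_{\mathbb Q}}}(R)$ is the set of finite $\mathbb Q_{\ge0}$-combinations of Betti diagrams of finitely generated graded $R$-modules; $\operatorname{pos}$ denotes finite $\mathbb Q_{\ge0}$-combinations. An $R$-degree sequence is either $(d_0,\infty,\infty,\ldots)$ with $d_0\in\mathbb Z$, or an integer sequence $(d_0,d_1,d_2,\ldots)$ with $d_0<d_1<d_0+n$ and $d_{i+2}-d_i=n$ for all $i\ge0$. For such $d$, $(\pi_d)_{i,j}=1$ if $j=d_i\ne\infty$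 and $0$ otherwise. Functionals on $v\in\mathbb V$: $\epsilon_{i,j}(v)=v_{i,j}$; $\alpha_{i,k}(v)=\epsilon_{i,k}(v)-\epsilon_{i+2,k+n}(v)$; $\theta_k(v)=\sum_{j\le k}\epsilon_{2,j}(v)-\sum_{j\le k-n+1}\epsilon_{1,j}(v)$; $\eta_k(v)=\sum_{j\le k}(\epsilon_{1,j}(v)-\epsilon_{2,j+1}(v))$; $\eta_\infty(v)=\sum_{j\in\mathbb Z}(\epsilon_{1,j}(v)-\epsilon_{2,j+1}(v))$ (all sums finite by column-finiteness). *)

From HB Require Import structures.
From mathcomp Require Import all_boot all_order all_algebra.
From Stdlib Require List.
Set Implicit Arguments. Unset Strict Implicit. Unset Printing Implicit Defensive.
Import Order.TTheory GRing.Theory Num.Theory.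
Local Open Scope ring_scope.

(* A finitely generated graded R-module is a finite-dimensional graded    *)
(* K-vector space M = (+)_j M_j together with x : M_j -> M_(j+1) with     *)
(* x^n = 0.  M_j is modelled as K^(gdim j) (row vectors), x on M_j as a   *)
(* matrix gx j (acting on the right: v |-> v *m gx j).                    *)

Definition isucc (z : int) : int := z + 1.

Fixpoint xpow (K : fieldType) (m : int -> nat)
    (X : forall j : int, 'M[K]_(m j, m (j + 1))) (r : nat) (j : int)
    : 'M[K]_(m j, m (iter r isucc j)) :=
  match r return 'M[K]_(m j, m (iter r isucc j)) with
  | 0 => 1%:M
  | r'.+1 => xpow X r' j *m X (iter r' isucc j)
  end.

Record gmod (K : fieldType) (n : nat) := GMod {
  gdim : int -> nat;
  gx : forall j : int, 'M[K]_(gdim j, gdim (j + 1));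
  gfin : exists a b : int, forall j : int, (j < a) || (b < j) -> gdim j = 0%N;
  gnil : forall j : int, xpow gx n j = 0
}.

(* Tor_i^R(M,K)_j, computed as the homology of M (x) F where F is the     *)
(* (minimal graded free) resolution of K = R/(x):                          *)
(*   0 <- R <-x- R(-1) <-x^(n-1)- R(-n) <-x- R(-n-1) <-x^(n-1)- ...        *)
(* F_i = R(-sh i), with differential F_i -> F_(i-1) multiplication by      *)
(* x^(pw i).  Hence (M (x) F_i)_j = M_(j - sh i), and the differential     *)
(* out of it in degree j is x^(pw i) : M_(j - sh i) -> M_(j - sh (i-1)).   *)
Definition sh (n i : nat) : int := ((i./2 * n) + odd i)%N%:Z.
Definition pw (n i : nat) : nat := if odd i then 1%N else n.-1.

(* dim Tor_i = dim ker d_i - dim im d_(i+1)  (d_0 = 0) *)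
Definition betti (K : fieldType) (n : nat) (M : gmod K n) (i : nat) (j : int)
    : nat :=
  (gdim M (j - sh n i)
   - (if i == 0%N then 0%N else \rank (xpow (@gx K n M) (pw n i) (j - sh n i)))
   - \rank (xpow (@gx K n M) (pw n i.+1) (j - sh n i.+1)))%N.

Definition inV (v : nat -> int -> rat) : Prop :=
  forall i : nat, exists a b : int, forall j : int, (j < a) || (b < j) -> v i j = 0.

Definition bettiQ (K : fieldType) (n : nat) (M : gmod K n) : nat -> int -> rat :=
  fun i j => (betti M i j)%:R.

Definition BQ (K : fieldType) (n : nat) (v : nat -> int -> rat) : Prop :=
  exists s : seq (rat * gmod K n),
    (forall p, List.In p s -> 0 <= p.1) /\
    forall i j, v i j = \sum_(p <- s) p.1 * bettiQ p.2 i j.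

(* R-degree sequences; None stands for infinity *)
Definition is_degseq (n : nat) (d : nat -> option int) : Prop :=
  (exists d0 : int, d 0%N = Some d0 /\ forall i, (0 < i)%N -> d i = None) \/
  (exists e : nat -> int, (forall i, d i = Some (e i)) /\
     e 0%N < e 1%N /\ e 1%N < e 0%N + n%:Z /\
     forall i, e i.+2 - e i = n%:Z).

Definition pi_d (d : nat -> option int) : nat -> int -> rat :=
  fun i j => if d i == Some j then 1 else 0.

Definition Dcone (n : nat) (v : nat -> int -> rat) : Prop :=
  exists s : seq (rat * (nat -> option int)),
    (forall p, List.In p s -> 0 <= p.1 /\ is_degseq n p.2) /\
    forall i j, v i j = \sum_(p <- s) p.1 * pi_d p.2 i j.

Definition isum (g : int -> rat) (L k : int) : rat :=
  if L <= k then \sum_(t < (absz (k - L)).+1) g (L + t%:Z) else 0.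

Definition vanish_below (g : int -> rat) (L : int) : Prop :=
  forall j, j < L -> g j = 0.
Definition vanish_above (g : int -> rat) (U : int) : Prop :=
  forall j, U < j -> g j = 0.

(* A finite-support sum  sum_{j <= k} g j  is isum g L k for ANY L below  *)
(* the support; conditions on such sums are stated for all such L.        *)
Definition eta_row (v : nat -> int -> rat) (j : int) : rat := v 1%N j - v 2%N (j + 1).

Definition Fcone (n : nat) (v : nat -> int -> rat) : Prop :=
  (* eps_{i,j} >= 0, i in {0,1,2} *)
  (forall (i : nat) (j : int), (i <= 2)%N -> 0 <= v i j) /\
  (* alpha_{0,k} >= 0 *)
  (forall k : int, 0 <= v 0%N k - v 2%N (k + n%:Z)) /\
  (* theta_k >= 0 *)
  (forall (k L1 L2 : int), vanish_below (v 2%N) L1 -> vanish_below (v 1%N) L2 ->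
     0 <= isum (v 2%N) L1 k - isum (v 1%N) L2 (k - n%:Z + 1)) /\
  (* eta_k >= 0 *)
  (forall (k L : int), vanish_below (eta_row v) L -> 0 <= isum (eta_row v) L k) /\
  (* alpha_{i,k} = 0 for i >= 1 *)
  (forall (i : nat) (k : int), (1 <= i)%N -> v i k = v i.+2 (k + n%:Z)) /\
  (* eta_infinity = 0 *)
  (forall L U : int, vanish_below (eta_row v) L -> vanish_above (eta_row v) U ->
     isum (eta_row v) L U = 0).

From HB Require Import structures.
From mathcomp Require Import all_boot all_order all_algebra.
From mathcomp Require Import zify ring lra.
From Stdlib Require Import FunctionalExtensionality Classical_Prop.
Import Order.TTheory GRing.Theory Num.Theory.
Local Open Scope ring_scope.
Set Implicit Arguments. Unset Strict Implicit. Unset Printing Implicit Defensive.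

(* We prove the cycle of inclusions  B_Q(R) <= F <= D <= B_Q(R).

   - B_Q(R) <= F.  For a module M let d_j = dim M_j, and a_j, b_j be the
     ranks of x and of x^(n-1) on M_j.  Computing Tor against the periodic
     resolution of K expresses beta_0, beta_1, beta_2 through d, a, b, and
     gives beta_(i+2, j+n) = beta_(i, j) for i >= 1.  The partial sums in
     theta_k and eta_k then telescope, and their signs follow from
     Frobenius' rank inequality for products of powers of x.  The infinite
     sums are handled through a normalised form [FconeFrom] of F in which all
     sums start at a common lower bound of the support; it is visibly a
     convex cone.
   - D <= B_Q(R).  Each pi_d is the Betti diagram of a cyclic module
     K[x]/(x^a) generated in a single degree.
   - F <= D.  Greedy decomposition: if row 1 of v is nonzero, its first
     nonzero degree d1 and that e0 of row 2 satisfy d1 < e0 <= d1 + n - 1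
     (by eta and theta), so e = (e0 - n, d1, e0, d1 + n, ...) is a degree
     sequence, and v - c pi_e stays in F for c = min(v_(1,d1), v_(2,e0)),
     with fewer nonzero entries.  Once row 1 vanishes, so do all higher
     rows, and v is a sum of free diagrams. *)

(** * Interval sums over the integers *)

Lemma int_ind_from (P : int -> Prop) (a : int) :
  P a -> (forall k, a <= k -> P k -> P (k + 1)) -> forall k, a <= k -> P k.
Proof.
move=> Pa IH k ak.
have -> : k = a + (absz (k - a)%R)%:Z by lia.
elim: (absz _) => [|m IHm]; first by rewrite addr0.
have -> : a + m.+1%:Z = (a + m%:Z) + 1 by lia.
by apply: IH => //; lia.
Qed.

Lemma int_ind_all (P : int -> Prop) (a : int) :
  (forall k, k <= a -> P k) -> (forall k, a <= k -> P k -> P (k + 1)) ->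
  forall k, P k.
Proof.
move=> Hle Hsucc k; have [hk|hk] := leP k a; first exact: Hle.
by apply: (@int_ind_from _ a) => //; [exact: Hle | lia].
Qed.

Section IntervalSums.
Implicit Types (f g : int -> rat) (L U k : int).

Lemma isum_empty g L k : k < L -> isum g L k = 0.
Proof. by move=> h; rewrite /isum ifF //; apply/negbTE; rewrite -ltNge. Qed.

Lemma isum_snoc g L k :
  isum g L (k + 1) = isum g L k + (if L <= k + 1 then g (k + 1) else 0).
Proof.
have [h|h] := leP L k.
  have hk1 : L <= k + 1 by lia.
  rewrite /isum h hk1.
  have -> : absz (k + 1 - L)%R = (absz (k - L)%R).+1 by lia.
  by rewrite big_ord_recr /=; congr (_ + g _); lia.
have [h2|h2] := leP L (k + 1); last first.
  by rewrite !isum_empty ?addr0 //; lia.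
have -> : L = k + 1 by lia.
rewrite [isum g _ k]isum_empty; last by lia.
by rewrite /isum lexx subrr big_ord_recr big_ord0 /= !add0r addr0.
Qed.

Lemma isum_snoc_vanish g L k :
  vanish_below g L -> isum g L (k + 1) = isum g L k + g (k + 1).
Proof.
move=> hv; rewrite isum_snoc; case: ifP => // h.
by rewrite hv ?addr0 // ltNge h.
Qed.

Lemma isum_ext f g L k :
  (forall j, L <= j -> j <= k -> f j = g j) -> isum f L k = isum g L k.
Proof.
move=> h; rewrite /isum; case: ifP => // hk; apply: eq_bigr => t _.
by have ht := ltn_ord t; apply: h; lia.
Qed.

Lemma isum_zero g L k : (forall j, j <= k -> g j = 0) -> isum g L k = 0.
Proof.
move=> h; rewrite /isum; case: ifP => // hk; apply: big1 => t _.
by have ht := ltn_ord t; apply: h; lia.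
Qed.

Lemma isum_add f g L k :
  isum (fun j => f j + g j) L k = isum f L k + isum g L k.
Proof. by rewrite /isum; case: ifP => _; rewrite ?addr0 // big_split. Qed.

Lemma isum_sub f g L k :
  isum (fun j => f j - g j) L k = isum f L k - isum g L k.
Proof. by rewrite /isum; case: ifP => _; rewrite ?subr0 // sumrB. Qed.

Lemma isum_scale (c : rat) g L k :
  isum (fun j => c * g j) L k = c * isum g L k.
Proof. by rewrite /isum; case: ifP => _; rewrite ?mulr0 // mulr_sumr. Qed.

Lemma isum_shift g (c : int) L k :
  isum (fun j => g (j + c)) L k = isum g (L + c) (k + c).
Proof.
rewrite /isum lerD2r; case: ifP => // _.
have -> : k + c - (L + c) = k - L by lia.
by apply: eq_bigr => t _; rewrite addrAC.
Qed.

Lemma isum_le f g L k : (forall j, f j <= g j) -> isum f L k <= isum g L k.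
Proof. by move=> h; rewrite /isum; case: ifP => // _; apply: ler_sum. Qed.

Lemma isum_delta (c : rat) (d : int) L k :
  isum (fun j => if j == d then c else 0) L k =
  if (L <= d) && (d <= k) then c else 0.
Proof.
move: k; apply: (@int_ind_all _ (L - 1)).
  move=> k hk; rewrite isum_empty; last by lia.
  by case: ifP => //; lia.
move=> k _ IH; rewrite isum_snoc IH /=.
have [hd|/eqP hd] := eqVneq (k + 1) d.
  have hdk : (d <= k) = false by lia.
  by rewrite hd hdk andbF add0r lexx andbT.
have -> : (d <= k + 1) = (d <= k) by apply/idP/idP; lia.
by rewrite if_same addr0.
Qed.

Lemma isum_point g L k d :
  (forall j, 0 <= g j) -> L <= d -> d <= k -> g d <= isum g L k.
Proof.
move=> hg h1 h2; have := isum_delta (g d) d L k; rewrite h1 h2 /= => <-.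
by apply: isum_le => j; case: eqP => [->|_].
Qed.

Lemma isum_lower g L L' k :
  vanish_below g L -> L' <= L -> isum g L' k = isum g L k.
Proof.
move=> hv hL; have [hk|hk] := leP L k; last first.
  by rewrite [RHS]isum_empty // isum_zero // => j hj; apply: hv; lia.
move: k hk; apply: (@int_ind_from _ L).
  rewrite -{1}(subrK 1 L) isum_snoc ifT; last by lia.
  rewrite (@isum_zero _ _ (L - 1)); last by move=> j hj; apply: hv; lia.
  by rewrite add0r subrK /isum subrr lexx big_ord_recr big_ord0 /= add0r addr0.
move=> k hLk IH; rewrite !isum_snoc IH ifT; last by lia.
by rewrite ifT //; lia.
Qed.

Lemma isum_indep g L1 L2 k :
  vanish_below g L1 -> vanish_below g L2 -> isum g L1 k = isum g L2 k.
Proof.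
move=> h1 h2; have [h|h] := leP L1 L2; first by rewrite (isum_lower _ h2 h).
by rewrite (@isum_lower _ L1 L2) // ltW.
Qed.

Lemma isum_upper g L U k :
  vanish_above g U -> U <= k -> isum g L k = isum g L U.
Proof.
move=> hv; move: k; apply: (@int_ind_from _ U) => // k hk IH.
by rewrite isum_snoc IH (hv (k + 1)); [case: ifP; rewrite addr0 | lia].
Qed.

End IntervalSums.

(** * Ranks of the powers of x on a graded module *)

Lemma iter_isucc r (j : int) : iter r isucc j = j + r%:Z.
Proof. by elim: r => [|r IH] /=; [rewrite addr0 | rewrite IH /isucc; lia]. Qed.

Section PowerRanks.
Variables (K : fieldType) (n : nat) (M : gmod K n).

Definition rkx (r : nat) (j : int) : nat := \rank (xpow (@gx K n M) r j).

Lemma rkx0 j : rkx 0 j = gdim M j.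
Proof. exact: mxrank1. Qed.

Lemma rkx_le_dim r j : (rkx r j <= gdim M j)%N.
Proof. exact: rank_leq_row. Qed.

(* A module is finite-dimensional, so all its graded pieces embed in a
   common K^N; this lets us compose powers of x without dependent casts. *)
Lemma gdim_bound : exists N : nat, forall j, (gdim M j <= N)%N.
Proof.
have [a [b hab]] := gfin M.
exists (\max_(t < (absz (b - a)%R).+1) gdim M (a + t%:Z)) => j.
have [h1|h1] := leP a j; last by rewrite hab // h1.
have [h2|h2] := leP j b; last by rewrite hab // h2 orbT.
have ht : (absz (j - a)%R < (absz (b - a)%R).+1)%N by lia.
have := @leq_bigmax _ (fun t : 'I_(absz (b - a)%R).+1 => gdim M (a + t%:Z)) (Ordinal ht).
by rewrite /= (_ : a + (absz (j - a)%R)%:Z = j) //; lia.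
Qed.

Section Padding.
Variable N : nat.
Hypothesis hN : forall j, (gdim M j <= N)%N.

Definition pad (j : int) : 'M[K]_(gdim M j, N) := pid_mx (gdim M j).
Definition xstep (j : int) : 'M[K]_N := (pad j)^T *m gx M j *m pad (j + 1).
Fixpoint xpad (r : nat) (j : int) : 'M[K]_N :=
  if r is r'.+1 then xpad r' j *m xstep (j + r'%:Z) else (pad j)^T *m pad j.

Lemma pad_mulTr j : pad j *m (pad j)^T = 1%:M.
Proof.
rewrite /pad tr_pid_mx mul_pid_mx (minn_idPr (leqnn _)) (minn_idPr (hN j)).
exact: pid_mx_1.
Qed.

Lemma xpadE r j : xpad r j = (pad j)^T *m xpow (@gx K n M) r j *m pad (iter r isucc j).
Proof.
elim: r => [|r IH] /=; first by rewrite mulmx1.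
rewrite IH /xstep -iter_isucc !mulmxA.
by rewrite -[_ *m pad _ *m (pad _)^T]mulmxA pad_mulTr mulmx1.
Qed.

Lemma rank_xpad r j : \rank (xpad r j) = rkx r j.
Proof.
have free i : row_free (pad i) by rewrite /row_free /pad rank_pid_mx.
rewrite xpadE mxrankMfree // -mxrank_tr trmx_mul trmxK mxrankMfree //.
exact: mxrank_tr.
Qed.

Lemma xpadD r s j : xpad (r + s) j = xpad r j *m xpad s (j + r%:Z).
Proof.
elim: s => [|s IH].
  rewrite addn0 !xpadE -iter_isucc /= mulmx1 !mulmxA.
  by rewrite -[_ *m pad _ *m (pad _)^T]mulmxA pad_mulTr mulmx1.
rewrite addnS /= IH -mulmxA; congr (_ *m (_ *m xstep _)).
by rewrite PoszD addrA.
Qed.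

Lemma xpad_nil r j : (n <= r)%N -> xpad r j = 0.
Proof.
move=> hr; rewrite -(subnKC hr) xpadD xpadE gnil.
by rewrite mulmx0 !mul0mx.
Qed.

End Padding.

Lemma rkx_nil r j : (n <= r)%N -> rkx r j = 0%N.
Proof.
move=> hr; have [N hN] := gdim_bound.
by rewrite -(rank_xpad hN) xpad_nil // mxrank0.
Qed.

Lemma rkx_Frobenius u v w j :
  (rkx (u + v) j + rkx (v + w) (j + u%:Z)
   <= rkx v (j + u%:Z) + rkx (u + v + w) j)%N.
Proof.
have [N hN] := gdim_bound; rewrite -!(rank_xpad hN).
have := mxrank_Frobenius (xpad N u j) (xpad N v (j + u%:Z))
  (xpad N w (j + u%:Z + v%:Z)).
by rewrite -!xpadD // -addrA -PoszD -xpadD // -xpadD.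
Qed.

Lemma rkx_nil_Frobenius u w j :
  (n <= u + w)%N -> (rkx u j + rkx w (j + u%:Z) <= gdim M (j + u%:Z))%N.
Proof.
move=> huw; have := rkx_Frobenius u 0 w j.
by rewrite addn0 add0n rkx0 (rkx_nil _ huw) addn0.
Qed.

End PowerRanks.

(** * Betti numbers of a module in terms of ranks of powers of x *)

Lemma sh0 n : sh n 0 = 0. Proof. by rewrite /sh /= mul0n. Qed.
Lemma sh1 n : sh n 1 = 1. Proof. by rewrite /sh /= mul0n. Qed.
Lemma sh2 n : sh n 2 = n%:Z. Proof. by rewrite /sh /= mul1n addn0. Qed.
Lemma sh3 n : sh n 3 = n%:Z + 1. Proof. by rewrite /sh /= mul1n. Qed.
Lemma shSS n i : sh n i.+2 = sh n i + n%:Z.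
Proof. by rewrite /sh /= -!PoszD; congr Posz; rewrite mulSn; lia. Qed.
Lemma pwSS n i : pw n i.+2 = pw n i. Proof. by rewrite /pw /= negbK. Qed.

Lemma shS n i : sh n i.+1 = sh n i + (if odd i then n%:Z - 1 else 1).
Proof.
by rewrite /sh /= uphalf_half; case: (odd i) => /=; [rewrite mulSn | rewrite add0n]; lia.
Qed.

Lemma pwS n i : pw n i.+1 = if odd i then n.-1 else 1%N.
Proof. by rewrite /pw /=; case: (odd i). Qed.

Lemma natrB2 (a b c : nat) : (b + c <= a)%N ->
  ((a - b - c)%N%:R : rat) = a%:R - b%:R - c%:R.
Proof. by move=> h; rewrite natrB ?natrB //; lia. Qed.

Section BettiFormulas.
Variables (K : fieldType) (n : nat) (M : gmod K n).
Definition dQ (j : int) : rat := (gdim M j)%:R.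
Definition aQ (j : int) : rat := (rkx M 1 j)%:R.
Definition bQ (j : int) : rat := (rkx M n.-1 j)%:R.

Lemma bettiE i j : betti M i j =
  (gdim M (j - sh n i) - (if i == 0%N then 0 else rkx M (pw n i) (j - sh n i))
   - rkx M (pw n i.+1) (j - sh n i.+1))%N.
Proof. by []. Qed.

Lemma betti_periodic i k : (1 <= i)%N -> betti M i.+2 (k + n%:Z) = betti M i k.
Proof.
move=> hi; rewrite !bettiE !shSS !pwSS.
have -> : k + n%:Z - (sh n i + n%:Z) = k - sh n i by lia.
have -> : k + n%:Z - (sh n i.+1 + n%:Z) = k - sh n i.+1 by lia.
by rewrite ifF ?ifF //; lia.
Qed.

(* The kernel of x^r on M_j is at most the sum of the kernels of x on
   M_j, ..., M_(j+r-1); this is the inequality behind eta_k >= 0. *)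
Lemma ker_xpow_le r j :
  dQ j <= (rkx M r j)%:R + \sum_(0 <= t < r) (dQ (j + t%:Z) - aQ (j + t%:Z)).
Proof.
elim: r => [|r IH]; first by rewrite big_geq // addr0 rkx0.
rewrite big_nat_recr //=; apply: (le_trans IH).
have := rkx_Frobenius M r 0 1 j; rewrite addn0 add0n rkx0 addn1 => h.
have : ((rkx M r j)%:R + aQ (j + r%:Z) <= dQ (j + r%:Z) + (rkx M r.+1 j)%:R :> rat).
  by rewrite /aQ /dQ -!natrD ler_nat.
lra.
Qed.

(* The ranks of x^(n-1) on M_p, M_(p-1), ..., M_(p-r+1) sum to at most the
   rank of x on M_p minus that of x^(r+1) on M_(p-r); this is the
   inequality behind theta_k >= 0. *)
Lemma sum_bQ_le r p : (r <= n.-1)%N ->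
  \sum_(0 <= c < r) bQ (p - c%:Z) <= aQ p - (rkx M r.+1 (p - r%:Z))%:R.
Proof.
elim: r => [|r IH] hr; first by rewrite big_geq // subr0 /aQ subrr.
rewrite big_nat_recr //=; have {IH} := IH (ltnW hr).
have := rkx_Frobenius M 1 r.+1 (n.-1 - r.+1) (p - r.+1%:Z).
rewrite (@rkx_nil K n M (1 + r.+1 + _)); last by lia.
rewrite add1n addn0 (_ : (r.+1 + (n.-1 - r.+1))%N = n.-1); last by lia.
rewrite (_ : p - r.+1%:Z + 1 = p - r%:Z); last by lia.
move=> h1 h2.
have : ((rkx M r.+2 (p - r.+1%:Z))%:R + bQ (p - r%:Z)
        <= (rkx M r.+1 (p - r%:Z))%:R :> rat).
  by rewrite /bQ -natrD ler_nat.
lra.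
Qed.

Hypothesis hn : (2 <= n)%N.

Lemma n_pred_succ : (1 + n.-1)%N = n.
Proof. by rewrite add1n prednK // ltnW. Qed.

(* The Betti table of M: Tor_0 = coker x, and Tor_1, Tor_2 are the homology
   of M(-1) -> M -> M(n-1) built from x and x^(n-1). *)
Lemma bettiQ0 j : bettiQ M 0 j = dQ j - aQ (j - 1).
Proof.
rewrite /bettiQ bettiE sh0 sh1 /= subn0 subr0 natrB //.
have := @rkx_nil_Frobenius K n M 1 n.-1 (j - 1); rewrite n_pred_succ subrK.
by move=> /(_ (leqnn n)); apply: leq_trans; apply: leq_addr.
Qed.

Lemma bettiQ1 j : bettiQ M 1 j = dQ (j - 1) - aQ (j - 1) - bQ (j - n%:Z).
Proof.
rewrite /bettiQ bettiE sh1 sh2 /= natrB2 //.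
have := @rkx_nil_Frobenius K n M n.-1 1 (j - n%:Z).
rewrite (_ : j - n%:Z + (n.-1)%:Z = j - 1); last by lia.
by rewrite addnC n_pred_succ addnC; apply.
Qed.

Lemma bettiQ2 j :
  bettiQ M 2 j = dQ (j - n%:Z) - bQ (j - n%:Z) - aQ (j - n%:Z - 1).
Proof.
rewrite /bettiQ bettiE sh2 sh3 /=.
rewrite (_ : j - (n%:Z + 1) = j - n%:Z - 1); last by lia.
rewrite natrB2 //; have := @rkx_nil_Frobenius K n M 1 n.-1 (j - n%:Z - 1).
by rewrite subrK n_pred_succ addnC; apply.
Qed.

End BettiFormulas.

(** * Two telescoping identities *)

(* Abstractly, rows 1 and 2 of a Betti table are given by the formulas of
   [bettiQ1] and [bettiQ2] in terms of functions D, A, B vanishing below [a]. *)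
Section Telescoping.
Variables (n : nat) (D A B v1 v2 : int -> rat) (a : int).
Hypotheses (hD : vanish_below D a) (hA : vanish_below A a) (hB : vanish_below B a)
  (e1 : forall j, v1 j = D (j - 1) - A (j - 1) - B (j - n%:Z))
  (e2 : forall j, v2 j = D (j - n%:Z) - B (j - n%:Z) - A (j - n%:Z - 1)).

Lemma v1_vanish : vanish_below v1 a.
Proof. by move=> j hj; rewrite e1 hD ?hA ?hB ?subrr ?subr0 //; lia. Qed.

Lemma v2_vanish : vanish_below v2 a.
Proof. by move=> j hj; rewrite e2 hD ?hA ?hB ?subrr ?subr0 //; lia. Qed.

Hypothesis hn : (2 <= n)%N.

Lemma theta_telescope k :
  isum v2 a k - isum v1 a (k - n%:Z + 1) =
  A (k - n%:Z) - \sum_(0 <= c < n.-1) B (k - n%:Z - c%:Z).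
Proof.
have [m en] : exists m, n = m.+2 by exists n.-2; lia.
have f1 := e1; have f2 := e2; rewrite en in f1 f2 *.
move: k; apply: (@int_ind_all _ (a - 1)).
  move=> k hk; rewrite !isum_empty ?hA ?subrr; try lia.
  by rewrite big1_seq // => c _; apply: hB; lia.
move=> k _ IH.
rewrite isum_snoc_vanish; last exact: v2_vanish.
rewrite (_ : k + 1 - m.+2%:Z + 1 = (k - m.+2%:Z + 1) + 1); last by lia.
rewrite isum_snoc_vanish; last exact: v1_vanish.
have -> : isum v2 a k + v2 (k + 1) -
    (isum v1 a (k - m.+2%:Z + 1) + v1 (k - m.+2%:Z + 1 + 1)) =
  (isum v2 a k - isum v1 a (k - m.+2%:Z + 1)) + v2 (k + 1)
    - v1 (k - m.+2%:Z + 1 + 1) by ring.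
rewrite IH f1 f2 /=.
have -> : \sum_(0 <= c < m.+1) B (k + 1 - m.+2%:Z - c%:Z) =
    B (k + 1 - m.+2%:Z) + \sum_(0 <= c < m) B (k - m.+2%:Z - c%:Z).
  rewrite big_nat_recl //; congr (B _ + _); first by lia.
  by apply: eq_bigr => c _; congr B; lia.
rewrite big_nat_recr //=.
rewrite (_ : k - m.+2%:Z + 1 + 1 - 1 = k + 1 - m.+2%:Z); last by lia.
rewrite (_ : k + 1 - m.+2%:Z - 1 = k - m.+2%:Z); last by lia.
rewrite (_ : k - m.+2%:Z + 1 + 1 - m.+2%:Z = k - m.+2%:Z - m%:Z); last by lia.
ring.
Qed.

Lemma eta_telescope k :
  isum v1 a k - isum v2 a (k + 1) =
  \sum_(0 <= t < n.-1) (D (k - n%:Z + 1 + t%:Z) - A (k - n%:Z + 1 + t%:Z))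
  - D (k - n%:Z + 1) + B (k - n%:Z + 1).
Proof.
have [m en] : exists m, n = m.+2 by exists n.-2; lia.
have f1 := e1; have f2 := e2; rewrite en in f1 f2 *.
move: k; apply: (@int_ind_all _ (a - 1)).
  move=> k hk; rewrite isum_empty; last by lia.
  rewrite isum_zero; last by move=> j hj; rewrite f2 hD ?hB ?hA ?subrr //; lia.
  rewrite hD ?hB; try lia.
  rewrite big1_seq ?subrr //= => t; rewrite mem_iota => /andP [_ ht].
  by rewrite hD ?hA ?subrr //; lia.
move=> k _ IH.
rewrite isum_snoc_vanish; last exact: v1_vanish.
rewrite (isum_snoc_vanish (k + 1)); last exact: v2_vanish.
have -> : isum v1 a k + v1 (k + 1) - (isum v2 a (k + 1) + v2 (k + 1 + 1)) =
  (isum v1 a k - isum v2 a (k + 1)) + v1 (k + 1) - v2 (k + 1 + 1) by ring.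
rewrite IH f1 f2 /=.
set f := fun t : int => D t - A t.
have -> : \sum_(0 <= t < m.+1)
    (D (k - m.+2%:Z + 1 + t%:Z) - A (k - m.+2%:Z + 1 + t%:Z)) =
  f (k - m.+2%:Z + 1) + \sum_(0 <= t < m) f (k + 1 - m.+2%:Z + 1 + t%:Z).
  rewrite big_nat_recl //; congr (_ + _); first by rewrite /f addr0.
  by apply: eq_bigr => t _; rewrite /f; congr (D _ - A _); lia.
have -> : \sum_(0 <= t < m.+1)
    (D (k + 1 - m.+2%:Z + 1 + t%:Z) - A (k + 1 - m.+2%:Z + 1 + t%:Z)) =
  \sum_(0 <= t < m) f (k + 1 - m.+2%:Z + 1 + t%:Z) + f k.
  by rewrite big_nat_recr //; congr (_ + _); rewrite /f; congr (D _ - A _); lia.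
rewrite /f (_ : k + 1 - 1 = k); last by lia.
rewrite (_ : k + 1 + 1 - m.+2%:Z - 1 = k - m.+2%:Z + 1); last by lia.
rewrite (_ : k + 1 - m.+2%:Z + 1 = k + 1 + 1 - m.+2%:Z); last by lia.
rewrite (_ : k + 1 - m.+2%:Z = k - m.+2%:Z + 1); last by lia.
ring.
Qed.

End Telescoping.

(** * The cone F in normalised form, and B_Q(R) is contained in F *)

(* Unlike [Fcone], this form is visibly closed under nonnegative
   combinations. *)
Record FconeFrom (n : nat) (L : int) (v : nat -> int -> rat) : Prop := {
  ff_support : forall i j, (i <= 2)%N -> j < L -> v i j = 0;
  ff_nonneg : forall i j, (i <= 2)%N -> 0 <= v i j;
  ff_alpha0 : forall k, 0 <= v 0%N k - v 2%N (k + n%:Z);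
  ff_theta : forall k, isum (v 1%N) L (k - n%:Z + 1) <= isum (v 2%N) L k;
  ff_eta : forall k, isum (v 2%N) L (k + 1) <= isum (v 1%N) L k;
  ff_periodic : forall i k, (1 <= i)%N -> v i k = v i.+2 (k + n%:Z);
  ff_eta_inf : exists U, forall k, U <= k ->
    isum (v 1%N) L k = isum (v 2%N) L (k + 1) }.

Lemma ff_vanish n L v i : FconeFrom n L v -> (i <= 2)%N -> vanish_below (v i) L.
Proof. by move=> hF hi j hj; apply: (ff_support hF). Qed.

Lemma ff_row_nonneg n L v i : FconeFrom n L v -> (i <= 2)%N -> forall j, 0 <= v i j.
Proof. by move=> hF hi j; apply: (ff_nonneg hF). Qed.

Lemma FconeFrom_lower n L L' v :
  FconeFrom n L v -> L' <= L -> FconeFrom n L' v.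
Proof.
move=> hF hL; have E i k : (i <= 2)%N -> isum (v i) L' k = isum (v i) L k.
  by move=> hi; apply: isum_lower (ff_vanish hF hi) hL.
split; try exact: ff_nonneg hF; try exact: ff_alpha0 hF; try exact: ff_periodic hF.
- by move=> i j hi hj; apply: (ff_support hF) => //; exact: lt_le_trans hj hL.
- by move=> k; rewrite !E //; apply: (ff_theta hF).
- by move=> k; rewrite !E //; apply: (ff_eta hF).
- by have [U hU] := ff_eta_inf hF; exists U => k hk; rewrite !E //; apply: hU.
Qed.

Lemma FconeFrom_zero n L : FconeFrom n L (fun _ _ => 0).
Proof.
have Z k : isum (fun _ => 0) L k = 0 by exact: isum_zero.
split => [//|//|k|k|k|//|]; rewrite /= ?Z ?subr0 //.
by exists 0 => k _; rewrite !Z.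
Qed.

Lemma FconeFrom_comb n L v w (c : rat) :
  FconeFrom n L v -> FconeFrom n L w -> 0 <= c ->
  FconeFrom n L (fun i j => c * v i j + w i j).
Proof.
move=> hv hw hc.
have E i k : isum (fun j => c * v i j + w i j) L k =
    c * isum (v i) L k + isum (w i) L k by rewrite isum_add isum_scale.
split.
- by move=> i j hi hj; rewrite (ff_support hv) ?(ff_support hw) // mulr0 addr0.
- by move=> i j hi; rewrite addr_ge0 ?mulr_ge0 ?(ff_nonneg hv) ?(ff_nonneg hw).
- move=> k; rewrite (_ : _ - _ = c * (v 0%N k - v 2%N (k + n%:Z))
      + (w 0%N k - w 2%N (k + n%:Z))); last by ring.
  by rewrite addr_ge0 ?mulr_ge0 ?(ff_alpha0 hv) ?(ff_alpha0 hw).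
- move=> k; rewrite !E; apply: lerD; last exact: (ff_theta hw).
  by apply: ler_wpM2l => //; apply: (ff_theta hv).
- move=> k; rewrite !E; apply: lerD; last exact: (ff_eta hw).
  by apply: ler_wpM2l => //; apply: (ff_eta hv).
- by move=> i k hi; rewrite (ff_periodic hv k hi) (ff_periodic hw k hi).
- have [U hU] := ff_eta_inf hv; have [U' hU'] := ff_eta_inf hw.
  exists (Num.max U U') => k; rewrite ge_max => /andP [hk hk'].
  by rewrite !E hU ?hU'.
Qed.

Lemma eta_row_vanish L v : vanish_below (v 1%N) L -> vanish_below (v 2%N) L ->
  vanish_below (eta_row v) (L - 1).
Proof. by move=> h1 h2 j hj; rewrite /eta_row h1 ?h2 ?subr0 //; lia. Qed.

Lemma isum_eta_row L v L0 k : vanish_below (v 1%N) L -> vanish_below (v 2%N) L ->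
  vanish_below (eta_row v) L0 ->
  isum (eta_row v) L0 k = isum (v 1%N) L k - isum (v 2%N) L (k + 1).
Proof.
move=> h1 h2 hv; rewrite (isum_indep _ hv (eta_row_vanish h1 h2)).
rewrite /eta_row isum_sub isum_shift subrK.
by rewrite (@isum_lower _ L (L - 1)) //; lia.
Qed.

Lemma FconeFrom_Fcone n L v : FconeFrom n L v -> Fcone n v.
Proof.
have r1 := @ff_vanish n L v 1%N; have r2 := @ff_vanish n L v 2%N.
move=> hF; have E := isum_eta_row _ (r1 hF isT) (r2 hF isT).
repeat split; [exact: (ff_nonneg hF) | exact: (ff_alpha0 hF) | | | |].
- move=> k L1 L2 hv2 hv1.
  rewrite (isum_indep _ hv2 (r2 hF isT)) (isum_indep _ hv1 (r1 hF isT)).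
  by rewrite subr_ge0 (ff_theta hF).
- by move=> k L0 hL0; rewrite E // subr_ge0 (ff_eta hF).
- exact: (ff_periodic hF).
- move=> L0 U0 hb ha; have [U hU] := ff_eta_inf hF.
  rewrite -(@isum_upper _ L0 U0 (Num.max U U0)) ?le_max ?lexx ?orbT //.
  by rewrite E // hU ?subrr // le_max lexx.
Qed.

Lemma module_support (K : fieldType) n (M : gmod K n) : exists a b : int,
  forall j, (j < a) || (b < j) -> [/\ dQ M j = 0, aQ M j = 0 & bQ M j = 0].
Proof.
have [a [b hab]] := gfin M; exists a, b => j hj.
have rk0 r : rkx M r j = 0%N by apply/eqP; rewrite -leqn0 -(hab j hj) rkx_le_dim.
by rewrite /dQ /aQ /bQ hab // !rk0.
Qed.

(* Betti diagrams of modules lie in F: the inequalities come from the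
   telescoping identities together with [ker_xpow_le] and [sum_bQ_le]. *)
Lemma module_FconeFrom (K : fieldType) n (M : gmod K n) :
  (2 <= n)%N -> exists L, FconeFrom n L (bettiQ M).
Proof.
move=> hn; have [a [b hab]] := module_support M.
have below (f : int -> rat) : (forall j, (j < a) || (b < j) -> f j = 0) ->
    vanish_below f a by move=> hf j hj; rewrite hf ?hj.
have hD : vanish_below (dQ M) a by apply: below => j /hab [].
have hA : vanish_below (aQ M) a by apply: below => j /hab [].
have hB : vanish_below (bQ M) a by apply: below => j /hab [].
have e0 := bettiQ0 M hn; have e1 := bettiQ1 M hn; have e2 := bettiQ2 M hn.
exists a; split.
- move=> [|[|[|i]]] j // _ hj; last exact: (v2_vanish hD hA hB e2 hj).
  + by rewrite e0 hD ?hA ?subrr //; lia.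
  + exact: (v1_vanish hD hA hB e1 hj).
- by move=> i j _; rewrite /bettiQ ler0n.
- move=> k; rewrite e0 e2 (_ : k + n%:Z - n%:Z = k); last by lia.
  have : 0 <= bQ M k by exact: ler0n.
  lra.
- move=> k; rewrite -subr_ge0 (theta_telescope hD hA hB e1 e2 hn) subr_ge0.
  apply: (le_trans (sum_bQ_le M (k - n%:Z) (leqnn _))).
  by rewrite prednK ?(ltnW hn) // rkx_nil // subr0.
- move=> k; rewrite -subr_ge0 (eta_telescope hD hA hB e1 e2 hn).
  have := ker_xpow_le M n.-1 (k - n%:Z + 1); rewrite /bQ; lra.
- by move=> i k hi; rewrite /bettiQ betti_periodic.
- exists (b + n%:Z) => k hk; apply/eqP; rewrite -subr_eq0; apply/eqP.
  rewrite (eta_telescope hD hA hB e1 e2 hn).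
  have [-> _ ->] := hab (k - n%:Z + 1) ltac:(apply/orP; right; lia).
  rewrite big1_seq ?subrr //= => t; rewrite mem_iota => /andP [_ ht].
  by have [-> -> _] := hab (k - n%:Z + 1 + t%:Z) ltac:(apply/orP; right; lia); rewrite subrr.
Qed.

Lemma FconeFrom_ext n L v w :
  (forall i j, v i j = w i j) -> FconeFrom n L v -> FconeFrom n L w.
Proof.
move=> e; suff -> : w = v by [].
by do 2 apply: functional_extensionality => ?; rewrite e.
Qed.

Lemma BQ_FconeFrom (K : fieldType) n v : (2 <= n)%N -> BQ K n v ->
  exists L, FconeFrom n L v.
Proof.
move=> hn [s [hs hv]].
suff [L hL] : exists L, FconeFrom n L (fun i j => \sum_(p <- s) p.1 * bettiQ p.2 i j).
  by exists L; apply: FconeFrom_ext hL => i j; rewrite hv.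
elim: s hs {hv} => [|p s IH] hs.
  by exists 0; apply: FconeFrom_ext (FconeFrom_zero n 0) => i j; rewrite big_nil.
have [L1 h1] := IH (fun q hq => hs q (or_intror hq)).
have [L2 h2] := module_FconeFrom p.2 hn.
exists (Num.min L1 L2).
apply: FconeFrom_ext (FconeFrom_comb _ _ (hs p (or_introl erefl))) => [i j||].
- by rewrite big_cons.
- by apply: (FconeFrom_lower h2); rewrite ge_min lexx orbT.
- by apply: (FconeFrom_lower h1); rewrite ge_min lexx.
Qed.

Definition window (a b : int) (v : nat -> int -> rat) : Prop :=
  forall i j, (i <= 2)%N -> (j < a) || (b < j) -> v i j = 0.

Lemma inV_window v : inV v -> exists a b : int, window a b v.
Proof.
move=> hv.
have [a0 [b0 h0]] := hv 0%N; have [a1 [b1 h1]] := hv 1%N; have [a2 [b2 h2]] := hv 2%N.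
exists (Num.min a0 (Num.min a1 a2)), (Num.max b0 (Num.max b1 b2)).
move=> [|[|[|i]]] j // _; rewrite !lt_min !gt_max.
- by move=> /orP [/and3P [h _ _] | /and3P [h _ _]]; rewrite h0 // h ?orbT.
- by move=> /orP [/and3P [_ h _] | /and3P [_ h _]]; rewrite h1 // h ?orbT.
- by move=> /orP [/and3P [_ _ h] | /and3P [_ _ h]]; rewrite h2 // h ?orbT.
Qed.

Lemma Fcone_FconeFrom n v a b : window a b v -> Fcone n v -> FconeFrom n a v.
Proof.
move=> hw [f1 [f2 [f3 [f4 [f5 f6]]]]].
have h0 i j : (i <= 2)%N -> j < a -> v i j = 0 by move=> hi hj; rewrite hw ?hj.
have vb i : (i <= 2)%N -> vanish_below (v i) a by move=> hi j; apply: h0.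
have veta := eta_row_vanish (vb 1%N isT) (vb 2%N isT).
have Eeta k := isum_eta_row k (vb 1%N isT) (vb 2%N isT) veta.
split => //.
- by move=> k; have := f3 k a a (vb 2%N isT) (vb 1%N isT); rewrite subr_ge0.
- by move=> k; have := f4 k (a - 1) veta; rewrite Eeta subr_ge0.
- exists b => k hk; apply/eqP; rewrite -subr_eq0 -Eeta; apply/eqP.
  by apply: f6 => // j hj; rewrite /eta_row !hw //; apply/orP; right; lia.
Qed.

(** * Cyclic modules realise the pure diagrams: D is contained in B_Q(R) *)

(* The cyclic module K[x]/(x^a) generated in degree s: one-dimensional in
   degrees s, ..., s + a - 1, with x acting as the identity between them. *)
Definition cdim (s : int) (a : nat) (j : int) : nat :=
  if (s <= j) && (j < s + a%:Z) then 1%N else 0%N.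

Definition cX (K : fieldType) (s : int) (a : nat) (j : int)
  : 'M[K]_(cdim s a j, cdim s a (j + 1)) := const_mx 1.

Lemma mx_dim0 (K : fieldType) (p q : nat) (A B : 'M[K]_(p, q)) :
  (p = 0)%N \/ (q = 0)%N -> A = B.
Proof.
move=> h; apply/matrixP => i k; case: h => e.
  by have := leq_trans (ltn_ord i) (eq_leq e).
by have := leq_trans (ltn_ord k) (eq_leq e).
Qed.

Lemma xpow_cyc (K : fieldType) (s : int) (a : nat) r j :
  xpow (@cX K s a) r j =
  if (s <= j) && (j + r%:Z < s + a%:Z) then const_mx 1 else 0.
Proof.
elim: r => [|r IH] /=.
  rewrite addr0; case: ifP => h; last by apply: mx_dim0; left; rewrite /cdim h.
  have e : cdim s a j = 1%N by rewrite /cdim h.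
  apply/matrixP => i k; rewrite !mxE.
  have hi := leq_trans (ltn_ord i) (eq_leq e).
  have hk := leq_trans (ltn_ord k) (eq_leq e).
  by rewrite (_ : i == k) //; apply/eqP/val_inj => /=; lia.
rewrite IH; case: ifP => h1.
  have e1 : cdim s a (iter r isucc j) = 1%N.
    by rewrite /cdim iter_isucc; case: ifP => //; lia.
  case: ifP => h2.
    apply/matrixP => i k; rewrite !mxE.
    rewrite (eq_bigr (fun _ => 1)); last by move=> t _; rewrite !mxE mulr1.
    by rewrite sumr_const card_ord e1.
  by apply: mx_dim0; right; rewrite /isucc /cdim iter_isucc; case: ifP => //; lia.
rewrite mul0mx; case: ifP => // h2.
by move: h1; rewrite (_ : j + r%:Z < s + a%:Z) ?andbT; [rewrite (andP h2).1 | lia].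
Qed.

Lemma cyc_fin (s : int) (a : nat) :
  exists lo hi : int, forall j : int, (j < lo) || (hi < j) -> cdim s a j = 0%N.
Proof. by exists s, (s + a%:Z) => j hj; rewrite /cdim; case: ifP => //; lia. Qed.

Lemma cyc_nil (K : fieldType) (n : nat) (s : int) (a : nat) :
  (a <= n)%N -> forall j, xpow (@cX K s a) n j = 0.
Proof. by move=> ha j; rewrite xpow_cyc; case: ifP => //; lia. Qed.

Definition cyc (K : fieldType) (n : nat) (s : int) (a : nat) (ha : (a <= n)%N)
  : gmod K n := @GMod K n (cdim s a) (@cX K s a) (cyc_fin s a) (cyc_nil K s ha).

Lemma rank_const1 (K : fieldType) (p q : nat) :
  p = 1%N -> q = 1%N -> \rank (const_mx 1 : 'M[K]_(p, q)) = 1%N.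
Proof.
move=> -> ->; rewrite (_ : const_mx 1 = 1%:M) ?mxrank1 //.
by apply/matrixP => i j; rewrite !mxE !ord1.
Qed.

Lemma rkx_cyc (K : fieldType) (n : nat) (s : int) (a : nat) (ha : (a <= n)%N) r j :
  rkx (cyc K s ha) r j = if (s <= j) && (j + r%:Z < s + a%:Z) then 1%N else 0%N.
Proof.
rewrite /rkx /= xpow_cyc; case: ifP => h; last by rewrite mxrank0.
by apply: rank_const1; rewrite /cdim ?iter_isucc; case: ifP => //; lia.
Qed.

(* The Betti table of K[x]/(x^a)(-s): for a = n it is the free module with a
   single generator in degree s; for 1 <= a < n the resolution is periodic,
   with generators in degrees s + sh n i (i even) and s + sh n i + a - 1
   (i odd). *)
Lemma betti_cyc (K : fieldType) (n : nat) (s : int) (a : nat) (ha : (a <= n)%N) i j :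
  (2 <= n)%N -> (1 <= a)%N ->
  betti (cyc K s ha) i j =
  nat_of_bool (if a == n then (i == 0%N) && (j == s)
     else j == s + sh n i + (if odd i then a%:Z - 1 else 0)).
Proof.
move=> hn ha1; rewrite bettiE !rkx_cyc shS pwS /= /cdim.
have hp : (n.-1)%:Z = n%:Z - 1 by lia.
have [->|hi0] := eqVneq i 0%N.
  by rewrite sh0 /= /pw /= !addr0; repeat case: ifP; lia.
rewrite /pw; case: (odd i); rewrite /= ?hp; repeat case: ifP; lia.
Qed.

Lemma degseq_form n (e : nat -> int) :
  (forall i, e i.+2 - e i = n%:Z) ->
  forall i, e i = e 0%N + sh n i + (if odd i then e 1%N - e 0%N - 1 else 0).
Proof.
move=> he.
suff h i : e i = e 0%N + sh n i + (if odd i then e 1%N - e 0%N - 1 else 0) /\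
    e i.+1 = e 0%N + sh n i.+1 + (if odd i.+1 then e 1%N - e 0%N - 1 else 0).
  by move=> i; case: (h i).
elim: i => [|i [IH1 IH2]]; first by rewrite sh0 sh1 /=; split; lia.
split => //; rewrite shSS /= negbK; have := he i; rewrite IH1; case: (odd i); lia.
Qed.

Lemma degseq_module (K : fieldType) n d : (2 <= n)%N -> is_degseq n d ->
  exists M : gmod K n, forall i j, bettiQ M i j = pi_d d i j.
Proof.
move=> hn [[d0 [h0 hi]] | [e [hd [h01 [h1n he]]]]].
  exists (cyc K d0 (leqnn n)) => i j.
  rewrite /bettiQ betti_cyc // ?eqxx /pi_d; last by lia.
  case: i => [|i]; last by rewrite hi.
  by rewrite h0 /=; case: (j =P d0) => [->|hj]; rewrite ?eqxx //;
     case: eqP => // [[]] /esym.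
have ha : ((absz (e 1%N - e 0%N)%R) <= n)%N by lia.
exists (cyc K (e 0%N) ha) => i j.
rewrite /bettiQ betti_cyc //; last by lia.
rewrite ifF; last by lia.
rewrite /pi_d hd (degseq_form he i).
rewrite (_ : (absz (e 1%N - e 0%N)%R)%:Z = e 1%N - e 0%N); last by lia.
set x := _ + _ + _.
by case: (j =P x) => [->|hj]; rewrite ?eqxx //; case: eqP => // [[]] /esym.
Qed.

Lemma Dcone_BQ (K : fieldType) n v : (2 <= n)%N -> Dcone n v -> BQ K n v.
Proof.
move=> hn [s [hs hv]].
suff [s' [hs' e]] : exists s' : seq (rat * gmod K n),
    (forall p, List.In p s' -> 0 <= p.1) /\
    forall i j, \sum_(p <- s) p.1 * pi_d p.2 i j = \sum_(p <- s') p.1 * bettiQ p.2 i j.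
  by exists s'; split => // i j; rewrite hv e.
elim: s hs {hv} => [|p s IH] hs; first by exists [::]; split => // i j; rewrite !big_nil.
have [s' [hs' e]] := IH (fun q hq => hs q (or_intror hq)).
have [hp1 hp2] := hs p (or_introl erefl).
have [M hM] := degseq_module K hn hp2.
exists ((p.1, M) :: s'); split; first by move=> q [<- | hq] //; apply: hs'.
by move=> i j; rewrite !big_cons e hM.
Qed.

(** * F is contained in D: greedy decomposition *)

Lemma Dcone_ext n v w : (forall i j, v i j = w i j) -> Dcone n v -> Dcone n w.
Proof. by move=> e [s [hs hv]]; exists s; split => // i j; rewrite -e. Qed.

Lemma Dcone_zero n : Dcone n (fun _ _ => 0).
Proof. by exists [::]; split => // i j; rewrite big_nil. Qed.

Lemma Dcone_add_pure n w c d : 0 <= c -> is_degseq n d -> Dcone n w ->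
  Dcone n (fun i j => c * pi_d d i j + w i j).
Proof.
move=> hc hd [s [hs hw]]; exists ((c, d) :: s); split.
  by move=> p [<- | hp] //; apply: hs.
by move=> i j; rewrite big_cons hw.
Qed.

Definition free_seq (d0 : int) : nat -> option int :=
  fun i => if i is 0%N then Some d0 else None.

Lemma free_degseq n d0 : is_degseq n (free_seq d0).
Proof. by left; exists d0; split => // -[|i]. Qed.

Lemma row0_Dcone n (f : int -> rat) a (W : nat) : (forall j, 0 <= f j) ->
  Dcone n (fun i j => if (i == 0%N) && (a <= j) && (j < a + W%:Z) then f j else 0).
Proof.
move=> hf; elim: W => [|W IH].
  by apply: Dcone_ext (Dcone_zero n) => i j; case: ifP => //; lia.
apply: Dcone_ext (Dcone_add_pure (hf (a + W%:Z)) (free_degseq n (a + W%:Z)) IH).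
move=> [|i] j /=; last by rewrite /pi_d mulr0 add0r.
rewrite /pi_d /=; have [<-|hj] := eqVneq (a + W%:Z) j.
  by rewrite eqxx mulr1; case: ifP => h1; case: ifP => h2; try lia; rewrite addr0.
rewrite (_ : (Some (a + W%:Z) == Some j) = false); last first.
  by apply/negbTE; apply: contra hj => /eqP [->].
by rewrite mulr0 add0r; case: ifP => h1; case: ifP => h2 //; move/eqP: hj; lia.
Qed.

Lemma first_nonzero (g : int -> rat) a : vanish_below g a ->
  (forall j, g j = 0) \/ exists d, [/\ a <= d, g d != 0 & vanish_below g d].
Proof.
move=> ha; have [[j hj]|hnone] := classic (exists j, g j != 0); last first.
  by left => j; apply/eqP/negPn/negP => hj; apply: hnone; exists j.
right; have haj : a <= j by rewrite leNgt; apply: contra hj => /ha ->.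
have hP : exists t : nat, g (a + t%:Z) != 0.
  by exists (absz (j - a)%R); rewrite (_ : a + _ = j) //; lia.
have [t ht hmin] := ex_minnP hP; exists (a + t%:Z); split => //; first by lia.
move=> k hk; have [hka|hka] := ltP k a; first exact: ha.
apply/eqP/negPn/negP => hk2; have := hmin (absz (k - a)%R).
by rewrite (_ : a + _ = k) ?hk2 //=; lia.
Qed.

Section FirstEntries.
Variables (n : nat) (a : int) (v : nat -> int -> rat).
Hypothesis hF : FconeFrom n a v.

(* By theta, a nonzero entry of row 1 in degree d forces a nonzero entry of
   row 2 in degree at most d + n - 1. *)
Lemma theta_row2 d : v 1%N d != 0 -> ~ vanish_below (v 2%N) (d + n%:Z).
Proof.
move=> hd hz; have hv1 := ff_row_nonneg hF (isT : 1 <= 2)%N.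
have had : a <= d by rewrite leNgt; apply: contra hd => /(ff_support hF) ->.
have := ff_theta hF (d + n%:Z - 1); rewrite (_ : d + n%:Z - 1 - n%:Z + 1 = d); last by lia.
rewrite (@isum_zero (v 2%N)); last by move=> j hj; apply: hz; lia.
have := isum_point hv1 had (lexx d); have : 0 < v 1%N d by rewrite lt_def hd hv1.
lra.
Qed.

(* By eta, a nonzero entry of row 2 in degree e forces a nonzero entry of
   row 1 in degree less than e. *)
Lemma eta_row1 e : v 2%N e != 0 -> ~ vanish_below (v 1%N) e.
Proof.
move=> he hz; have hv2 := ff_row_nonneg hF (isT : 2 <= 2)%N.
have hae : a <= e by rewrite leNgt; apply: contra he => /(ff_support hF) ->.
have := ff_eta hF (e - 1); rewrite subrK.
rewrite (@isum_zero (v 1%N)); last by move=> j hj; apply: hz; lia.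
have := isum_point hv2 hae (lexx e); have : 0 < v 2%N e by rewrite lt_def he hv2.
lra.
Qed.

End FirstEntries.

(* Base case of the greedy decomposition: if row 1 vanishes, then so do
   rows 2, 3, ... (by eta and periodicity), and v is a sum of free diagrams. *)
Lemma Dcone_row1_zero n a b v :
  FconeFrom n a v -> window a b v -> (forall j, v 1%N j = 0) -> Dcone n v.
Proof.
move=> hF hw v1z.
have v2z j : v 2%N j = 0.
  by apply/eqP/negPn/negP => h; apply: (eta_row1 hF h) => k _; apply: v1z.
have vz k j : v k.+1 j = 0 /\ v k.+2 j = 0.
  elim: k j => [|k IH] j; first by split.
  split; first by case: (IH j).
  have := ff_periodic hF (j - n%:Z) (isT : (1 <= k.+1)%N); rewrite subrK => <-.
  by case: (IH (j - n%:Z)).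
apply: Dcone_ext (row0_Dcone n a (absz (b - a)%R).+1 (ff_row_nonneg hF (isT : 0 <= 2)%N)).
move=> [|i] j /=; last by case: (vz i j).
by case: ifP => // hj; rewrite hw //; lia.
Qed.


Definition eseq (n : nat) (d1 e0 : int) (i : nat) : int :=
  (if odd i then d1 else e0 - n%:Z) + (i./2 * n)%N%:Z.

Lemma eseq0 n d1 e0 : eseq n d1 e0 0 = e0 - n%:Z.
Proof. by rewrite /eseq /= mul0n addr0. Qed.
Lemma eseq1 n d1 e0 : eseq n d1 e0 1 = d1.
Proof. by rewrite /eseq /= mul0n addr0. Qed.
Lemma eseq2 n d1 e0 : eseq n d1 e0 2 = e0.
Proof. by rewrite /eseq /= mul1n subrK. Qed.
Lemma eseqSS n d1 e0 i : eseq n d1 e0 i.+2 = eseq n d1 e0 i + n%:Z.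
Proof. by rewrite /eseq /= negbK mulSn PoszD addrA [_ + n%:Z]addrC addrA; lia. Qed.

Lemma eseq_degseq n d1 e0 : d1 < e0 -> e0 <= d1 + n%:Z - 1 ->
  is_degseq n (fun i => Some (eseq n d1 e0 i)).
Proof.
move=> h1 h2; right; exists (eseq n d1 e0); split => //.
by rewrite eseq0 eseq1; split; [lia | split => [|i]; [lia | rewrite eseqSS; lia]].
Qed.

Lemma pi_someE (e : nat -> int) i j :
  pi_d (fun i => Some (e i)) i j = if e i == j then 1 else 0.
Proof.
rewrite /pi_d; case: (eqVneq (e i) j) => [->|h]; rewrite ?eqxx // ifF //.
by apply/negbTE; apply: contra h => /eqP [->].
Qed.

(* The support of g within the window [a, b], and the number of nonzero
   entries of rows 1 and 2 there: the measure that decreases along the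
   greedy decomposition. *)
Definition row_supp (a b : int) (g : int -> rat) : {set 'I_(absz (b - a)%R).+1} :=
  [set t : 'I_(absz (b - a)%R).+1 | g (a + t%:Z) != 0].

Definition nnz12 (a b : int) (v : nat -> int -> rat) : nat :=
  (#|row_supp a b (v 1%N)| + #|row_supp a b (v 2%N)|)%N.

Lemma row_supp_proper a b (g g' : int -> rat) x :
  a <= x <= b -> g x != 0 -> g' x = 0 ->
  row_supp a b g' \subset row_supp a b g -> row_supp a b g' \proper row_supp a b g.
Proof.
move=> /andP [hax hxb] hg hg' sub; have hW : (absz (x - a)%R < (absz (b - a)%R).+1)%N by lia.
have ex : a + (absz (x - a)%R)%:Z = x by lia.
by apply/properP; split => //; exists (Ordinal hW); rewrite !inE /= ex ?hg' ?eqxx.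
Qed.

(* One greedy step: subtract from v the largest multiple of the pure diagram
   pi_e, e = (e0 - n, d1, e0, d1 + n, ...), determined by the first nonzero
   entries d1 of row 1 and e0 of row 2 that keeps v in F. *)
Section Peeling.
Variables (n : nat) (a b : int) (v : nat -> int -> rat) (d1 e0 : int).
Hypotheses (hF : FconeFrom n a v) (hw : window a b v)
  (hd1 : v 1%N d1 != 0) (hz1 : vanish_below (v 1%N) d1)
  (he0 : v 2%N e0 != 0) (hz2 : vanish_below (v 2%N) e0).

(* The first entries are interlaced: d1 < e0 <= d1 + n - 1, so e is an
   R-degree sequence. *)
Lemma peel_order : d1 < e0 /\ e0 <= d1 + n%:Z - 1.
Proof.
split; [rewrite ltNge | rewrite leNgt]; apply/negP => h.
  by apply: (eta_row1 hF he0) => j hj; apply: hz1; lia.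
by apply: (theta_row2 hF hd1) => j hj; apply: hz2; lia.
Qed.

Definition peel_c : rat := Num.min (v 1%N d1) (v 2%N e0).

Definition peeled (i : nat) (j : int) : rat :=
  v i j - peel_c * pi_d (fun i => Some (eseq n d1 e0 i)) i j.

Lemma peeledE i j :
  peeled i j = v i j - (if eseq n d1 e0 i == j then peel_c else 0).
Proof. by rewrite /peeled pi_someE; case: ifP; rewrite ?mulr1 ?mulr0. Qed.

Lemma peel_c_pos : 0 < peel_c.
Proof.
have nz i j : (i <= 2)%N -> v i j != 0 -> 0 < v i j.
  by move=> hi hj; rewrite lt_def hj (ff_nonneg hF).
by rewrite lt_min !nz.
Qed.

Lemma peel_c_le i : (i <= 2)%N -> peel_c <= v i (eseq n d1 e0 i).
Proof.
have c2 : peel_c <= v 2%N e0 by rewrite ge_min lexx orbT.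
case: i => [|[|[|]]] // _; rewrite ?eseq0 ?eseq1 ?eseq2 //; last by rewrite ge_min lexx.
by apply: (le_trans c2); have := ff_alpha0 hF (e0 - n%:Z); rewrite subrK subr_ge0.
Qed.

Lemma peel_e_window i : (i <= 2)%N -> a <= eseq n d1 e0 i <= b.
Proof.
move=> hi; have := lt_le_trans peel_c_pos (peel_c_le hi).
by apply: contraTT; rewrite negb_and -!ltNge => /hw -> //; rewrite ltxx.
Qed.

Lemma isum_peeled i k : (i <= 2)%N ->
  isum (peeled i) a k = isum (v i) a k - (if eseq n d1 e0 i <= k then peel_c else 0).
Proof.
move=> hi; rewrite (@isum_ext _ (fun j => v i j - (if j == eseq n d1 e0 i then peel_c else 0))).
  by rewrite isum_sub isum_delta (andP (peel_e_window hi)).1.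
by move=> j _ _; rewrite peeledE eq_sym.
Qed.

Lemma peel_window : window a b peeled.
Proof.
move=> i j hi hj; rewrite peeledE hw // ifF ?subr0 //.
by apply: contraTF hj => /eqP <-; rewrite negb_or -!leNgt; apply: peel_e_window.
Qed.

(* The remainder stays in F: the subtracted indicators shift in step with
   the partial sums in theta and eta, thanks to [peel_order]. *)
Lemma peel_FconeFrom : FconeFrom n a peeled.
Proof.
have [o1 o2] := peel_order; have hc := peel_c_pos.
have win1 := peel_e_window (isT : 1 <= 2)%N; have win2 := peel_e_window (isT : 2 <= 2)%N.
rewrite eseq1 in win1; rewrite eseq2 in win2.
have p1 k := isum_peeled k (isT : 1 <= 2)%N; have p2 k := isum_peeled k (isT : 2 <= 2)%N.
rewrite eseq1 in p1; rewrite eseq2 in p2.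
have hv1 := ff_row_nonneg hF (isT : 1 <= 2)%N; have hv2 := ff_row_nonneg hF (isT : 2 <= 2)%N.
have c1 : peel_c <= v 1%N d1 by rewrite ge_min lexx.
have c2 : peel_c <= v 2%N e0 by rewrite ge_min lexx orbT.
split.
- move=> i j hi hj; rewrite peeledE (ff_support hF) // ifF ?subr0 //.
  by apply: contraTF hj => /eqP <-; rewrite -leNgt; case/andP: (peel_e_window hi).
- move=> i j hi; rewrite peeledE; case: eqP => [<-|_].
    by rewrite subr_ge0 peel_c_le.
  by rewrite subr0 (ff_nonneg hF).
- move=> k; rewrite !peeledE eseq0 eseq2.
  rewrite (_ : (e0 == k + n%:Z) = (e0 - n%:Z == k)); last first.
    by apply/idP/idP => /eqP h; apply/eqP; lia.
  by have := ff_alpha0 hF k; case: ifP => _; lra.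
- move=> k; rewrite p1 p2; have := ff_theta hF k.
  case: ifP => hA; case: ifP => hB; try lra; try (exfalso; lia).
  rewrite (@isum_zero (v 1%N)); last by move=> j hj; apply: hz1; lia.
  have := isum_point hv2 (andP win2).1 hB; lra.
- move=> k; rewrite p1 p2; have := ff_eta hF k.
  case: ifP => hA; case: ifP => hB; try lra; try (exfalso; lia).
  rewrite (@isum_zero (v 2%N)); last by move=> j hj; apply: hz2; lia.
  have := isum_point hv1 (andP win1).1 hB; lra.
- move=> i k hi; rewrite !peeledE eseqSS (ff_periodic hF k hi).
  rewrite (_ : (eseq n d1 e0 i + n%:Z == k + n%:Z) = (eseq n d1 e0 i == k)) //.
  by apply/idP/idP => /eqP h; apply/eqP; lia.
- have [U hU] := ff_eta_inf hF; exists (Num.max U b) => k; rewrite ge_max => /andP [hUk hbk].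
  by rewrite p1 p2 !ifT ?hU //; lia.
Qed.

Lemma peel_decomp i j :
  v i j = peel_c * pi_d (fun i => Some (eseq n d1 e0 i)) i j + peeled i j.
Proof. by rewrite /peeled; ring. Qed.

Lemma peel_supp_sub i : (i <= 2)%N -> row_supp a b (peeled i) \subset row_supp a b (v i).
Proof.
move=> hi; apply/subsetP => t; rewrite !inE peeledE; apply: contra => /eqP hz.
rewrite hz; have [he|_] := eqVneq (eseq n d1 e0 i) (a + t%:Z); last by rewrite /= subr0.
by have := lt_le_trans peel_c_pos (peel_c_le hi); rewrite he hz ltxx.
Qed.

(* Each step removes a nonzero entry of row 1 or of row 2. *)
Lemma peel_nnz : (nnz12 a b peeled < nnz12 a b v)%N.
Proof.
have sub1 := peel_supp_sub (isT : 1 <= 2)%N; have sub2 := peel_supp_sub (isT : 2 <= 2)%N.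
have win1 := peel_e_window (isT : 1 <= 2)%N; have win2 := peel_e_window (isT : 2 <= 2)%N.
rewrite eseq1 in win1; rewrite eseq2 in win2; rewrite /nnz12.
have [hle|hlt] := leP (v 1%N d1) (v 2%N e0).
  have pr : row_supp a b (peeled 1%N) \proper row_supp a b (v 1%N).
    apply: (row_supp_proper win1 hd1) => //.
  by rewrite peeledE eseq1 eqxx /peel_c min_l // subrr.
  by rewrite -addSn leq_add ?proper_card ?subset_leq_card.
have pr : row_supp a b (peeled 2%N) \proper row_supp a b (v 2%N).
  apply: (row_supp_proper win2 he0) => //.
  by rewrite peeledE eseq2 eqxx /peel_c min_r ?ltW // subrr.
by rewrite -addnS leq_add ?proper_card ?subset_leq_card.
Qed.

Lemma peel_step : exists (c : rat) (d : nat -> option int) (w : nat -> int -> rat),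
  (forall i j, v i j = c * pi_d d i j + w i j) /\
  [/\ 0 <= c, is_degseq n d, FconeFrom n a w, window a b w &
      (nnz12 a b w < nnz12 a b v)%N].
Proof.
have [o1 o2] := peel_order.
exists peel_c, (fun i => Some (eseq n d1 e0 i)), peeled.
split; first exact: peel_decomp.
split.
- exact: ltW peel_c_pos.
- exact: eseq_degseq.
- exact: peel_FconeFrom.
- exact: peel_window.
- exact: peel_nnz.
Qed.

End Peeling.

Lemma FconeFrom_Dcone n a b v : FconeFrom n a v -> window a b v -> Dcone n v.
Proof.
move: {2}(nnz12 a b v).+1 (ltnSn (nnz12 a b v)) => N.
elim: N v => [//|N IH] v hcnt hF hw.
have [v1z|[d1 [_ hd1 hz1]]] := first_nonzero (ff_vanish hF (isT : 1 <= 2)%N).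
  exact: Dcone_row1_zero hF hw v1z.
have [v2z|[e0 [_ he0 hz2]]] := first_nonzero (ff_vanish hF (isT : 2 <= 2)%N).
  by case: (theta_row2 hF hd1) => j _; apply: v2z.
have [c [d [w [hv [hc hd hFw hww hlt]]]]] := peel_step hF hw hd1 hz1 he0 hz2.
have hDw := IH w (leq_trans hlt hcnt) hFw hww.
by apply: Dcone_ext (Dcone_add_pure hc hd hDw) => i j; rewrite hv.
Qed.

Theorem theorem3p4 (K : fieldType) (n : nat) (hn : (2 <= n)%N)
    (v : nat -> int -> rat) (hv : inV v) :
  (BQ K n v <-> Dcone n v) /\ (Dcone n v <-> Fcone n v).
Proof.
have BF : BQ K n v -> Fcone n v.
  by move=> /(BQ_FconeFrom hn) [L hL]; exact: FconeFrom_Fcone hL.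
have FD : Fcone n v -> Dcone n v.
  have [a [b hw]] := inV_window hv.
  by move=> hF; apply: FconeFrom_Dcone (Fcone_FconeFrom hw hF) hw.
have DB : Dcone n v -> BQ K n v := Dcone_BQ K hn.
by split; split; auto.
Qed.
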